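(* Let $\mathbb{B}$ be a small bicategory. Then there is an isomorphism of abelian groups $$\mathrm{E}_2^{1,1}\cong\mathrm{Ker}\big(\mathrm{Iso}(\mathbf{Z}(\mathbb{B}))\to \mathrm{Z}(\mathbf{Ho}(\mathbb{B}))\big),$$ where the kernel of the characteristic homomorphism means the set of elements of $\mathrm{Iso}(\mathbf{Z}(\mathbb{B}))$ mapped to the unit of $\mathrm{Z}(\mathbf{Ho}(\mathbb{B}))$ (all such elements are invertible, so this is an abelian group).
   Context: $\mathbb{B}$ is a bicategory with hom-categories $\mathbb{B}(x,y)$, horizontal composition $\otimes\colon\mathbb{B}(y,z)\times\mathbb{B}(x,y)\to\mathbb{B}(x,z)$, identity 1-morphisms $\mathrm{Id}(x)$ and unit identifications $\mathrm{Id}(z)\otimes M\cong M\cong M\otimes\mathrm{Id}(y)$. The Drinfeld center $\mathbf{Z}(\mathbb{B})$ has objects $(P,p)$ with $P=(P(x)\in\mathbb{B}(x,x))_x$ and $p=(p(M)\colon P(y)\otimes M\to M\otimes P(x))_{M\in\mathbb{B}(x,y)}$ natural isomorphisms such that $p(\mathrm{Id}(x))$ is the composite of unit constraints and $p(M\otimes N)=(\mathrm{id}(M)\otimes p(N))(p(M)\otimes\mathrm{id}(N))$ (associators suppressed); morphisms are families $f(x)\colon P(x)\to Q(x)$ with $q(M)(f(y)\otimes\mathrm{id})=(\mathrm{id}\otimes f(x))p(M)$; it is a tensor category under $(P\otimes Q)(x)=P(x)\otimes Q(x)$ with unit $E(x)=\mathrm{Id}(x)$. The classifying category $\mathbf{Ho}(\mathbb{B})$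 has the objects of $\mathbb{B}$ and morphism sets $\mathrm{Iso}\,\mathbb{B}(x,y)$ (isomorphism classes of 1-morphisms); its center $\mathrm{Z}(\mathbf{Ho}(\mathbb{B}))$ is the monoid of families $([P(x)])_x$ with $P(z)\otimes M\cong M\otimes P(y)$ for all $M\in\mathbb{B}(y,z)$. The characteristic homomorphism $\mathrm{Iso}(\mathbf{Z}(\mathbb{B}))\to\mathrm{Z}(\mathbf{Ho}(\mathbb{B}))$ sends $[(P,p)]$ to $([P(x)])_x$. Let $\mathrm{E}_1^{0,1}=\prod_x\mathrm{Aut}(\mathrm{Id}(x))$ and $\mathrm{E}_1^{1,1}=\prod_{y,z}\mathrm{Aut}(\mathrm{id}_{\mathbb{B}(y,z)})$ (natural automorphisms $f=(f(M))$ of identity functors). Let $\mathrm{Z}_1^{1,1}=\{f\in\mathrm{E}_1^{1,1}: f(M\otimes N)=f(M)\otimes f(N)\text{ for all composable }M,N\}$ and $\mathrm{B}_1^{1,1}=\{f: f(M)=(u(z)\otimes\mathrm{id}(M))(\mathrm{id}(M)\otimes u(y)^{-1})\text{ for }M\in\mathbb{B}(y,z),\ u\in\mathrm{E}_1^{0,1}\}$ (using the unit identifications), a subgroup of $\mathrm{Z}_1^{1,1}$. Set $\mathrm{E}_2^{1,1}=\mathrm{Z}_1^{1,1}/\mathrm{B}_1^{1,1}$. *)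

Set Implicit Arguments.
Unset Strict Implicit.

(* Conventions: [vc b a] is vertical composite "b after a";
   [hc M N] is M (x) N for M : y -> z, N : x -> y. *)
Record Bicat := {
  ob : Type;
  hom : ob -> ob -> Type;
  cell : forall {x y : ob}, hom x y -> hom x y -> Type;
  id2 : forall {x y : ob} (f : hom x y), cell f f;
  vc : forall {x y : ob} {f g h : hom x y}, cell g h -> cell f g -> cell f h;
  vc_assoc : forall x y (f g h k : hom x y) (a : cell h k) (b : cell g h) (c : cell f g),
      vc a (vc b c) = vc (vc a b) c;
  vc_id_l : forall x y (f g : hom x y) (a : cell f g), vc (id2 g) a = a;
  vc_id_r : forall x y (f g : hom x y) (a : cell f g), vc a (id2 f) = a;
  idm : forall x : ob, hom x x;
  hc : forall {x y z : ob}, hom y z -> hom x y -> hom x z;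
  hc2 : forall {x y z : ob} {M M' : hom y z} {N N' : hom x y},
      cell M M' -> cell N N' -> cell (hc M N) (hc M' N');
  hc2_id : forall x y z (M : hom y z) (N : hom x y),
      hc2 (id2 M) (id2 N) = id2 (hc M N);
  hc2_vc : forall x y z (M M' M'' : hom y z) (N N' N'' : hom x y)
      (a : cell M' M'') (b : cell M M') (c : cell N' N'') (d : cell N N'),
      hc2 (vc a b) (vc c d) = vc (hc2 a c) (hc2 b d);
  asc : forall {w x y z : ob} (L : hom y z) (M : hom x y) (N : hom w x),
      cell (hc (hc L M) N) (hc L (hc M N));
  asci : forall {w x y z : ob} (L : hom y z) (M : hom x y) (N : hom w x),
      cell (hc L (hc M N)) (hc (hc L M) N);
  asc_inv1 : forall w x y z (L : hom y z) (M : hom x y) (N : hom w x),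
      vc (asci L M N) (asc L M N) = id2 _;
  asc_inv2 : forall w x y z (L : hom y z) (M : hom x y) (N : hom w x),
      vc (asc L M N) (asci L M N) = id2 _;
  asc_nat : forall w x y z (L L' : hom y z) (M M' : hom x y) (N N' : hom w x)
      (a : cell L L') (b : cell M M') (c : cell N N'),
      vc (asc L' M' N') (hc2 (hc2 a b) c) = vc (hc2 a (hc2 b c)) (asc L M N);
  lu : forall {x y : ob} (M : hom x y), cell (hc (idm y) M) M;
  lui : forall {x y : ob} (M : hom x y), cell M (hc (idm y) M);
  lu_inv1 : forall x y (M : hom x y), vc (lui M) (lu M) = id2 _;
  lu_inv2 : forall x y (M : hom x y), vc (lu M) (lui M) = id2 _;
  lu_nat : forall x y (M M' : hom x y) (a : cell M M'),
      vc a (lu M) = vc (lu M') (hc2 (id2 (idm y)) a);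
  ru : forall {x y : ob} (M : hom x y), cell (hc M (idm x)) M;
  rui : forall {x y : ob} (M : hom x y), cell M (hc M (idm x));
  ru_inv1 : forall x y (M : hom x y), vc (rui M) (ru M) = id2 _;
  ru_inv2 : forall x y (M : hom x y), vc (ru M) (rui M) = id2 _;
  ru_nat : forall x y (M M' : hom x y) (a : cell M M'),
      vc a (ru M) = vc (ru M') (hc2 a (id2 (idm x)));
  pentagon : forall v w x y z (K : hom y z) (L : hom x y) (M : hom w x) (N : hom v w),
      vc (asc K L (hc M N)) (asc (hc K L) M N)
      = vc (hc2 (id2 K) (asc L M N))
           (vc (asc K (hc L M) N) (hc2 (asc K L M) (id2 N)));
  triangle : forall x y z (M : hom y z) (N : hom x y),
      vc (hc2 (id2 M) (lu N)) (asc M (idm y) N) = hc2 (ru M) (id2 N)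
}.


Section Center.
Variable B : Bicat.

Definition iso2 {x y : ob B} {f g : hom x y} (a : cell f g) : Prop :=
  exists b : cell g f, vc b a = id2 f /\ vc a b = id2 g.

(* Raw data of a (candidate) object of the Drinfeld center:
   P(x) : x -> x and p(M) : P(y) (x) M -> M (x) P(x) for M : x -> y. *)
Record ZPre := {
  zP : forall x : ob B, hom x x;
  zp : forall (x y : ob B) (M : hom x y), cell (hc (zP y) M) (hc M (zP x))
}.
Arguments zp _ {x y} _.

Definition ZAx (X : ZPre) : Prop :=
  (forall x y (M : hom x y), iso2 (zp X M)) /\
  (forall x y (M M' : hom x y) (a : cell M M'),
      vc (zp X M') (hc2 (id2 (zP X y)) a) = vc (hc2 a (id2 (zP X x))) (zp X M)) /\
  (forall x, zp X (idm x) = vc (lui (zP X x)) (ru (zP X x))) /\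
  (forall x y z (M : hom y z) (N : hom x y),
      zp X (hc M N)
      = vc (asci M N (zP X x))
          (vc (hc2 (id2 M) (zp X N))
            (vc (asc M (zP X y) N)
              (vc (hc2 (zp X M) (id2 N)) (asci (zP X z) M N))))).

Record ZObj := { zpre :> ZPre; zax : ZAx zpre }.

Definition ZHom (X Y : ZPre) (f : forall x, cell (zP X x) (zP Y x)) : Prop :=
  forall x y (M : hom x y),
    vc (zp Y M) (hc2 (f y) (id2 M)) = vc (hc2 (id2 M) (f x)) (zp X M).
Arguments ZHom : clear implicits.

Definition ZIso (X Y : ZPre) : Prop :=
  exists (f : forall x, cell (zP X x) (zP Y x)) (g : forall x, cell (zP Y x) (zP X x)),
    ZHom X Y f /\ ZHom Y X g /\
    forall x, vc (g x) (f x) = id2 _ /\ vc (f x) (g x) = id2 _.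

Definition ZTensor (X Y : ZPre) : ZPre :=
  {| zP := fun x => hc (zP X x) (zP Y x);
     zp := fun x y M =>
       vc (asc M (zP X x) (zP Y x))
         (vc (hc2 (zp X M) (id2 (zP Y x)))
           (vc (asci (zP X y) M (zP Y x))
             (vc (hc2 (id2 (zP X y)) (zp Y M))
                (asc (zP X y) (zP Y y) M)))) |}.

(* (P,p) lies in the kernel of the characteristic homomorphism:
   [P(x)] = [Id(x)] in Ho(B) for every object x *)
Definition InKer (X : ZPre) : Prop :=
  forall x, exists a : cell (zP X x) (idm x), iso2 a.

(* Elements of E_1^{1,1}: natural automorphisms of the identity functors of
   all hom-categories (the inverse family is carried as data). *)
Record E1 := {
  ef : forall (x y : ob B) (M : hom x y), cell M M;
  efi : forall (x y : ob B) (M : hom x y), cell M M;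
  ef_inv : forall (x y : ob B) (M : hom x y),
      vc (efi M) (ef M) = id2 M /\ vc (ef M) (efi M) = id2 M;
  ef_nat : forall (x y : ob B) (M M' : hom x y) (a : cell M M'), vc (ef M') a = vc a (ef M)
}.
Arguments ef _ {x y} _.
Arguments efi _ {x y} _.

Definition isZ1 (f : E1) : Prop :=
  forall x y z (M : hom y z) (N : hom x y), ef f (hc M N) = hc2 (ef f M) (ef f N).

(* B_1^{1,1}: f(M) = (u(z) (x) id(M)) (id(M) (x) u(y)^{-1}), u in E_1^{0,1},
   using the unit identifications Id(z)(x)M = M = M(x)Id(y). *)
Definition isB1 (h : forall (x y : ob B) (M : hom x y), cell M M) : Prop :=
  exists (u ui : forall x, cell (idm x) (idm x)),
    (forall x, vc (ui x) (u x) = id2 _ /\ vc (u x) (ui x) = id2 _) /\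
    forall y z (M : hom y z),
      h y z M = vc (vc (lu M) (vc (hc2 (u z) (id2 M)) (lui M)))
                   (vc (ru M) (vc (hc2 (id2 M) (ui y)) (rui M))).

(* f and g define the same class in E_2^{1,1} = Z_1/B_1 : f g^{-1} in B_1 *)
Definition B1rel (f g : E1) : Prop :=
  isB1 (fun x y M => vc (ef f M) (efi g M)).

End Center.

Arguments zP {B} _ _.
Arguments zp {B} _ {x y} _.
Arguments ef {B} _ {x y} _.
Arguments efi {B} _ {x y} _.

(* Take the unit object Id of Z(B) and twist its half-braiding by a natural
   automorphism f of the identity functors: p_f(M) = ρ⁻¹ ∘ f(M) ∘ λ.  The unit
   axiom of Z(B) then holds automatically and the hexagon axiom for p_f is
   exactly f(M ⊗ N) = f(M) ⊗ f(N), so every f in Z_1^{1,1} gives an object of the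
   kernel.  Conversely, for (P, p) in the kernel, transporting p along chosen
   isomorphisms a(x) : P(x) ≅ Id(x) gives such an f, and a is then an isomorphism
   (P, p) ≅ (Id, p_f) in Z(B).  A morphism (Id, p_f) → (Id, p_g) is a family
   u(x) ∈ Aut(Id(x)) with g(M) (u ⊗ id) = (id ⊗ u) f(M) up to unitors, which,
   as all these cells commute with each other, says f g⁻¹ = (u ⊗ id)(id ⊗ u⁻¹):
   the classes of f and g agree in Z_1/B_1.  Finally λ_Id = ρ_Id is an
   isomorphism (Id, p_{fg}) ≅ (Id, p_f) ⊗ (Id, p_g). *)

From Stdlib Require Import ssreflect ClassicalEpsilon.

Section Bicategory.
Set Implicit Arguments.
Variable B : Bicat.
Local Notation "a ∘ b" := (vc a b) (at level 38, right associativity).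
Local Notation "a ⊗ b" := (hc2 a b) (at level 34).

Lemma vc_prefix2 [x y : ob B] [f g h : hom x y] [a : cell g h] [b : cell f g] [c : cell f h] :
  a ∘ b = c -> forall (l : hom x y) (m : cell l f), a ∘ (b ∘ m) = c ∘ m.
Proof. by move=> H l m; rewrite vc_assoc H. Qed.

Lemma vc_prefix3 [x y : ob B] [f g h k : hom x y]
    [a : cell h k] [b : cell g h] [c : cell f g] [d : cell f k] :
  a ∘ (b ∘ c) = d -> forall (l : hom x y) (m : cell l f), a ∘ (b ∘ (c ∘ m)) = d ∘ m.
Proof. by move=> H l m; rewrite (vc_assoc b) (vc_assoc a) H. Qed.

Ltac vnorm := repeat rewrite <- vc_assoc.
Ltac vsimp := vnorm; repeat (rewrite ?vc_id_l ?vc_id_r ?hc2_id; vnorm).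
Tactic Notation "vrw" uconstr(H) :=
  first [ rewrite H | rewrite (vc_prefix2 H) | rewrite (vc_prefix3 H) ];
  vnorm; rewrite ?vc_id_l ?vc_id_r; vnorm.

Lemma vc_cancel_r [x y : ob B] [f g h : hom x y] (k : cell f g) (ki : cell g f) (a b : cell g h) :
  k ∘ ki = id2 g -> a ∘ k = b ∘ k -> a = b.
Proof. by move=> Hk H; rewrite -(vc_id_r a) -(vc_id_r b) -Hk !vc_assoc H. Qed.

Lemma vc_cancel_l [x y : ob B] [f g h : hom x y] (k : cell g h) (ki : cell h g) (a b : cell f g) :
  ki ∘ k = id2 g -> k ∘ a = k ∘ b -> a = b.
Proof. by move=> Hk H; rewrite -(vc_id_l a) -(vc_id_l b) -Hk -!vc_assoc H. Qed.

Definition inv2 [x y : ob B] [f g : hom x y] [a : cell f g] (H : iso2 a) : cell g f :=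
  proj1_sig (constructive_indefinite_description _ H).

Lemma inv2K [x y : ob B] [f g : hom x y] [a : cell f g] (H : iso2 a) : inv2 H ∘ a = id2 f.
Proof. exact: proj1 (proj2_sig (constructive_indefinite_description _ H)). Qed.

Lemma inv2K' [x y : ob B] [f g : hom x y] [a : cell f g] (H : iso2 a) : a ∘ inv2 H = id2 g.
Proof. exact: proj2 (proj2_sig (constructive_indefinite_description _ H)). Qed.

Lemma hc2_split_l [x y z : ob B] [M M' : hom y z] [N N' : hom x y] (a : cell M M') (b : cell N N') :
  a ⊗ b = (a ⊗ id2 N') ∘ (id2 M ⊗ b).
Proof. by rewrite -hc2_vc vc_id_r vc_id_l. Qed.

Lemma hc2_split_r [x y z : ob B] [M M' : hom y z] [N N' : hom x y] (a : cell M M') (b : cell N N') :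
  a ⊗ b = (id2 M' ⊗ b) ∘ (a ⊗ id2 N).
Proof. by rewrite -hc2_vc vc_id_r vc_id_l. Qed.

Lemma hc2_interchange [x y z : ob B] [M M' : hom y z] [N N' : hom x y] (a : cell M M') (b : cell N N') :
  (a ⊗ id2 N') ∘ (id2 M ⊗ b) = (id2 M' ⊗ b) ∘ (a ⊗ id2 N).
Proof. by rewrite -hc2_split_l -hc2_split_r. Qed.

Lemma whisker_r_vc [x y z : ob B] [M M' M'' : hom y z] (N : hom x y) (a : cell M' M'') (b : cell M M') :
  (a ∘ b) ⊗ id2 N = (a ⊗ id2 N) ∘ (b ⊗ id2 N).
Proof. by rewrite -hc2_vc vc_id_l. Qed.

Lemma whisker_l_vc [x y z : ob B] (M : hom y z) [N N' N'' : hom x y] (a : cell N' N'') (b : cell N N') :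
  id2 M ⊗ (a ∘ b) = (id2 M ⊗ a) ∘ (id2 M ⊗ b).
Proof. by rewrite -hc2_vc vc_id_l. Qed.

Lemma whisker_r_inv [x y z : ob B] [M M' : hom y z] (N : hom x y) [a : cell M M'] [b : cell M' M] :
  b ∘ a = id2 M -> (b ⊗ id2 N) ∘ (a ⊗ id2 N) = id2 (hc M N).
Proof. by move=> H; rewrite -whisker_r_vc H hc2_id. Qed.

Lemma whisker_l_inv [x y z : ob B] (M : hom y z) [N N' : hom x y] [a : cell N N'] [b : cell N' N] :
  b ∘ a = id2 N -> (id2 M ⊗ b) ∘ (id2 M ⊗ a) = id2 (hc M N).
Proof. by move=> H; rewrite -whisker_l_vc H hc2_id. Qed.

Lemma lui_nat [x y : ob B] [M M' : hom x y] (a : cell M M') : lui M' ∘ a = (id2 (idm y) ⊗ a) ∘ lui M.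
Proof.
  apply: (vc_cancel_r (lu M) (lui M)); first exact: lu_inv2.
  by vnorm; rewrite lu_nat; vrw (lu_inv1 M'); rewrite lu_inv1 vc_id_r.
Qed.

Lemma rui_nat [x y : ob B] [M M' : hom x y] (a : cell M M') : rui M' ∘ a = (a ⊗ id2 (idm x)) ∘ rui M.
Proof.
  apply: (vc_cancel_r (ru M) (rui M)); first exact: ru_inv2.
  by vnorm; rewrite ru_nat; vrw (ru_inv1 M'); rewrite ru_inv1 vc_id_r.
Qed.

Lemma asci_nat [w x y z : ob B] [L L' : hom y z] [M M' : hom x y] [N N' : hom w x]
  (a : cell L L') (b : cell M M') (c : cell N N') :
  asci L' M' N' ∘ (a ⊗ (b ⊗ c)) = ((a ⊗ b) ⊗ c) ∘ asci L M N.
Proof.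
  apply: (vc_cancel_r (asc L M N) (asci L M N)); first exact: asc_inv2.
  by vnorm; rewrite -asc_nat; vrw (asc_inv1 L' M' N'); rewrite asc_inv1 vc_id_r.
Qed.

Lemma asc_nat_l [w x y z : ob B] [L L' : hom y z] (M : hom x y) (N : hom w x) (a : cell L L') :
  asc L' M N ∘ ((a ⊗ id2 M) ⊗ id2 N) = (a ⊗ id2 (hc M N)) ∘ asc L M N.
Proof. by rewrite asc_nat hc2_id. Qed.

Lemma asc_nat_r [w x y z : ob B] (L : hom y z) (M : hom x y) [N N' : hom w x] (c : cell N N') :
  asc L M N' ∘ (id2 (hc L M) ⊗ c) = (id2 L ⊗ (id2 M ⊗ c)) ∘ asc L M N.
Proof. by rewrite -asc_nat hc2_id. Qed.

Lemma whisker_r_idm_inj [x y : ob B] [M M' : hom x y] (a b : cell M M') :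
  a ⊗ id2 (idm x) = b ⊗ id2 (idm x) -> a = b.
Proof. by move=> H; rewrite -(vc_id_r a) -(vc_id_r b) -(ru_inv2 M) !vc_assoc !ru_nat H. Qed.

Lemma whisker_l_idm_inj [x y : ob B] [M M' : hom x y] (a b : cell M M') :
  id2 (idm y) ⊗ a = id2 (idm y) ⊗ b -> a = b.
Proof. by move=> H; rewrite -(vc_id_r a) -(vc_id_r b) -(lu_inv2 M) !vc_assoc !lu_nat H. Qed.

Lemma asc_inj [w x y z : ob B] [L : hom y z] [M : hom x y] [N : hom w x] [K : hom w z]
  (a b : cell K (hc (hc L M) N)) : asc L M N ∘ a = asc L M N ∘ b -> a = b.
Proof. exact: vc_cancel_l (asc_inv1 L M N). Qed.

(* Kelly's consequences of the pentagon and triangle axioms. *)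
Lemma ru_hc [x y z : ob B] (M : hom y z) (N : hom x y) :
  (id2 M ⊗ ru N) ∘ asc M N (idm x) = ru (hc M N).
Proof.
  symmetry; apply: whisker_r_idm_inj; apply: asc_inj.
  rewrite whisker_r_vc. vrw (asc_nat (id2 M) (ru N) (id2 (idm x))).
  rewrite -(triangle N (idm x)) whisker_l_vc. vnorm.
  vrw (eq_sym (pentagon M N (idm x) (idm x))).
  vrw (eq_sym (asc_nat (id2 M) (id2 N) (lu (idm x)))).
  by rewrite hc2_id; vrw (triangle (hc M N) (idm x)).
Qed.

Lemma lu_hc [x y z : ob B] (M : hom y z) (N : hom x y) :
  lu (hc M N) ∘ asc (idm z) M N = lu M ⊗ id2 N.
Proof.
  apply: whisker_l_idm_inj.
  apply: (vc_cancel_r (asc (idm z) (hc (idm z) M) N ∘ (asc (idm z) (idm z) M ⊗ id2 N))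
                      ((asci (idm z) (idm z) M ⊗ id2 N) ∘ asci (idm z) (hc (idm z) M) N)).
  { vsimp. vrw (eq_sym (whisker_r_vc N (asc (idm z) (idm z) M) (asci (idm z) (idm z) M))).
    by rewrite asc_inv2 hc2_id; vsimp; rewrite asc_inv2. }
  rewrite whisker_l_vc. vnorm. vrw (eq_sym (pentagon (idm z) (idm z) M N)).
  vrw (triangle (idm z) (hc M N)). vrw (eq_sym (asc_nat_l M N (ru (idm z)))).
  rewrite -triangle whisker_r_vc. vnorm. by vrw (asc_nat (id2 (idm z)) (lu M) (id2 N)).
Qed.

Lemma lu_idm_hc [x y : ob B] (M : hom x y) : lu (hc (idm y) M) = id2 (idm y) ⊗ lu M.
Proof. by apply: (vc_cancel_l (lu M) (lui M)); [exact: lu_inv1 | rewrite lu_nat]. Qed.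

Lemma lu_ru_idm (x : ob B) : lu (idm x) = ru (idm x).
Proof. by apply: whisker_r_idm_inj; rewrite -triangle -lu_hc lu_idm_hc. Qed.

Lemma lui_rui_idm (x : ob B) : lui (idm x) = rui (idm x).
Proof.
  apply: (vc_cancel_l (lu (idm x)) (lui (idm x))); first exact: lu_inv1.
  by rewrite lu_inv2 lu_ru_idm ru_inv2.
Qed.

Lemma rui_hc [x y z : ob B] (M : hom y z) (N : hom x y) :
  asci M N (idm x) ∘ (id2 M ⊗ rui N) = rui (hc M N).
Proof.
  apply: (vc_cancel_l (ru (hc M N)) (rui (hc M N))); first exact: ru_inv1.
  rewrite ru_inv2 -ru_hc. vsimp. vrw (asc_inv2 M N (idm x)).
  by rewrite -whisker_l_vc ru_inv2 hc2_id.
Qed.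

Lemma lu_hc_asci [x y z : ob B] (M : hom y z) (N : hom x y) :
  lu (hc M N) = (lu M ⊗ id2 N) ∘ asci (idm z) M N.
Proof. by rewrite -lu_hc; vsimp; rewrite asc_inv2 vc_id_r. Qed.

Lemma triangle_inv [x y z : ob B] (M : hom y z) (N : hom x y) :
  asc M (idm y) N ∘ (rui M ⊗ id2 N) = id2 M ⊗ lui N.
Proof.
  apply: (vc_cancel_l (id2 M ⊗ lu N) (id2 M ⊗ lui N)); first exact (whisker_l_inv M (lu_inv1 N)).
  rewrite -whisker_l_vc lu_inv2 hc2_id. vrw (triangle M N).
  by rewrite -whisker_r_vc ru_inv2 hc2_id.
Qed.

Lemma asc_rui_hc [x y z : ob B] (M : hom y z) (N : hom x y) :
  asc M N (idm x) ∘ rui (hc M N) = id2 M ⊗ rui N.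
Proof. by rewrite -rui_hc; vrw (asc_inv2 M N (idm x)). Qed.

Lemma unitors_hexagon [x y z : ob B] (M : hom y z) (N : hom x y) :
  rui (hc M N) ∘ lu (hc M N) =
  asci M N (idm x) ∘ (id2 M ⊗ (rui N ∘ lu N)) ∘ asc M (idm y) N
    ∘ ((rui M ∘ lu M) ⊗ id2 N) ∘ asci (idm z) M N.
Proof.
  rewrite whisker_l_vc whisker_r_vc. vnorm. vrw (triangle M N).
  vrw (eq_sym (whisker_r_vc N (ru M) (rui M))). rewrite ru_inv2 hc2_id vc_id_l.
  by rewrite lu_hc_asci; vrw (rui_hc M N).
Qed.

Lemma efK (f : E1 B) [x y : ob B] (M : hom x y) : efi f M ∘ ef f M = id2 M.
Proof. exact: proj1 (ef_inv f M). Qed.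

Lemma efK' (f : E1 B) [x y : ob B] (M : hom x y) : ef f M ∘ efi f M = id2 M.
Proof. exact: proj2 (ef_inv f M). Qed.

Lemma ef_idm (f : E1 B) : isZ1 f -> forall x : ob B, ef f (idm x) = id2 (idm x).
Proof.
  move=> Hf x.
  have Hru : ru (idm x) ∘ (id2 (idm x) ⊗ ef f (idm x)) = ru (idm x).
  { apply: (vc_cancel_l (ef f (idm x)) (efi f (idm x))); first exact: efK.
    rewrite [RHS](ef_nat f (ru (idm x))) Hf (hc2_split_l (ef f (idm x))). vnorm.
    by vrw (eq_sym (ru_nat (ef f (idm x)))). }
  have Hwhisk : id2 (idm x) ⊗ ef f (idm x) = id2 _.
  { apply: (vc_cancel_l (ru (idm x)) (rui (idm x))); first exact: ru_inv1.
    by rewrite Hru vc_id_r. }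
  apply: (vc_cancel_r (lu (idm x)) (lui (idm x))); first exact: lu_inv2.
  by rewrite lu_nat Hwhisk !vc_id_r vc_id_l.
Qed.

Definition twisted_unit (f : E1 B) : ZPre B :=
  {| zP := fun x => idm x; zp := fun x y M => rui M ∘ (ef f M ∘ lu M) |}.

Definition hexagon (X : ZPre B) : Prop :=
  forall x y z (M : hom y z) (N : hom x y),
    zp X (hc M N)
    = asci M N (zP X x) ∘ (id2 M ⊗ zp X N) ∘ asc M (zP X y) N
        ∘ (zp X M ⊗ id2 N) ∘ asci (zP X z) M N.

Lemma twisted_zp_l (f : E1 B) [x y : ob B] (M : hom x y) :
  rui M ∘ (ef f M ∘ lu M) = (ef f M ⊗ id2 (idm x)) ∘ (rui M ∘ lu M).
Proof. by rewrite (vc_prefix2 (rui_nat (ef f M))); vnorm. Qed.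

Lemma twisted_zp_r (f : E1 B) [x y : ob B] (M : hom x y) :
  rui M ∘ (ef f M ∘ lu M) = rui M ∘ (lu M ∘ (id2 (idm y) ⊗ ef f M)).
Proof. by rewrite lu_nat. Qed.

Lemma twisted_hexagon_rhs (f : E1 B) [x y z : ob B] (M : hom y z) (N : hom x y) :
  asci M N (idm x) ∘ (id2 M ⊗ (rui N ∘ (ef f N ∘ lu N))) ∘ asc M (idm y) N
    ∘ ((rui M ∘ (ef f M ∘ lu M)) ⊗ id2 N) ∘ asci (idm z) M N
  = rui (hc M N) ∘ ((ef f M ⊗ ef f N) ∘ lu (hc M N)).
Proof.
  rewrite (hc2_split_r (ef f M) (ef f N)). vnorm.
  vrw (rui_nat (id2 M ⊗ ef f N)). vrw (lu_nat (ef f M ⊗ id2 N)). vrw (unitors_hexagon M N).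
  rewrite (twisted_zp_l f N) (twisted_zp_r f M) !whisker_l_vc !whisker_r_vc. vnorm.
  vrw (asci_nat (id2 M) (ef f N) (id2 (idm x))).
  by rewrite -(asci_nat (id2 (idm z)) (ef f M) (id2 N)).
Qed.

Lemma unitor_conj_inj [x y : ob B] [M M' : hom x y] (c d : cell M M') :
  rui M' ∘ (c ∘ lu M) = rui M' ∘ (d ∘ lu M) -> c = d.
Proof.
  move=> H; apply: (vc_cancel_l (rui M') (ru M') _ _ (ru_inv2 M')).
  by apply: (vc_cancel_r (lu M) (lui M) _ _ (lu_inv2 M)); vnorm.
Qed.

Lemma twisted_unit_hexagon (f : E1 B) : hexagon (twisted_unit f) <-> isZ1 f.
Proof.
  split=> H x y z M N.
  - by apply: unitor_conj_inj; rewrite -twisted_hexagon_rhs; apply: H.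
  - by rewrite /= H -twisted_hexagon_rhs.
Qed.

Lemma twisted_unit_ax (f : E1 B) : isZ1 f -> ZAx (twisted_unit f).
Proof.
  move=> Hf; split; [|split; [|split]] => /=.
  - move=> x y M; exists (lui M ∘ (efi f M ∘ ru M)); split; vsimp.
    + by vrw (ru_inv2 M); vrw (efK f M); apply: lu_inv1.
    + by vrw (lu_inv2 M); vrw (efK' f M); apply: ru_inv1.
  - move=> x y M M' a; vnorm.
    by vrw (eq_sym (lu_nat a)); vrw (ef_nat f a); vrw (rui_nat a).
  - by move=> x; rewrite ef_idm // vc_id_l lu_ru_idm lui_rui_idm.
  - exact/twisted_unit_hexagon.
Qed.

Lemma twisted_unit_InKer (f : E1 B) : InKer (twisted_unit f).
Proof. by move=> x; exists (id2 (idm x)), (id2 (idm x)); split; apply: vc_id_l. Qed.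

Lemma ZIso_of_ZHom (X Y : ZPre B) (f : forall x, cell (zP X x) (zP Y x))
    (g : forall x, cell (zP Y x) (zP X x)) :
  ZHom f -> (forall x, g x ∘ f x = id2 _ /\ f x ∘ g x = id2 _) -> ZIso X Y.
Proof.
  move=> Hf Hfg; exists f, g; split=> //; split=> // x y M.
  apply: (vc_cancel_r (f y ⊗ id2 M) (g y ⊗ id2 M)); first exact (whisker_r_inv M (proj2 (Hfg y))).
  vnorm; rewrite Hf (whisker_r_inv M (proj1 (Hfg y))) vc_id_r.
  by vrw (whisker_l_inv M (proj1 (Hfg x))).
Qed.

Section KernelObject.
Variables (X : ZPre B) (a : forall x, cell (zP X x) (idm x)).
Hypothesis a_iso : forall x, iso2 (a x).
Hypothesis X_ax : ZAx X.

Let ai x : cell (idm x) (zP X x) := inv2 (a_iso x).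
Let aK x : ai x ∘ a x = id2 _ := inv2K (a_iso x).
Let aK' x : a x ∘ ai x = id2 _ := inv2K' (a_iso x).
Let zp_iso : forall x y (M : hom x y), iso2 (zp X M) := proj1 X_ax.
Let zp_nat := proj1 (proj2 X_ax).
Let zp_hexagon : hexagon X := proj2 (proj2 (proj2 X_ax)).

(* Transport of the half-braiding p(M) along the isomorphisms a : P(x) ≅ Id(x). *)
Definition kernel_aut [x y] (M : hom x y) : cell M M :=
  ru M ∘ (id2 M ⊗ a x) ∘ zp X M ∘ (ai y ⊗ id2 M) ∘ lui M.

Definition kernel_aut_inv [x y] (M : hom x y) : cell M M :=
  lu M ∘ (a y ⊗ id2 M) ∘ inv2 (zp_iso _ _ M) ∘ (id2 M ⊗ ai x) ∘ rui M.

Lemma kernel_aut_invK x y (M : hom x y) :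
  kernel_aut_inv M ∘ kernel_aut M = id2 M /\ kernel_aut M ∘ kernel_aut_inv M = id2 M.
Proof.
  rewrite /kernel_aut /kernel_aut_inv; split; vsimp.
  - vrw (ru_inv1 M). vrw (whisker_l_inv M (aK x)). vrw (inv2K (zp_iso _ _ M)).
    vrw (whisker_r_inv M (aK' y)). exact: lu_inv2.
  - vrw (lu_inv1 M). vrw (whisker_r_inv M (aK y)). vrw (inv2K' (zp_iso _ _ M)).
    vrw (whisker_l_inv M (aK' x)). exact: ru_inv2.
Qed.

Lemma kernel_aut_nat x y (M M' : hom x y) (c : cell M M') :
  kernel_aut M' ∘ c = c ∘ kernel_aut M.
Proof.
  rewrite /kernel_aut; vnorm.
  vrw (lui_nat c). vrw (hc2_interchange (ai y) c). vrw (zp_nat _ _ _ _ c).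
  vrw (eq_sym (hc2_interchange c (a x))). by vrw (eq_sym (ru_nat c)).
Qed.

Definition kernel_E1 : E1 B := Build_E1 kernel_aut_invK kernel_aut_nat.

Lemma kernel_twisted_zp [x y] (M : hom x y) :
  rui M ∘ (kernel_aut M ∘ lu M) = (id2 M ⊗ a x) ∘ zp X M ∘ (ai y ⊗ id2 M).
Proof. by rewrite /kernel_aut; vsimp; vrw (ru_inv1 M); rewrite lu_inv1 vc_id_r. Qed.

Lemma kernel_E1_Z1 : isZ1 kernel_E1.
Proof.
  apply/twisted_unit_hexagon => x y z M N /=.
  rewrite !kernel_twisted_zp zp_hexagon !whisker_l_vc !whisker_r_vc. vnorm.
  vrw (asci_nat (id2 M) (id2 N) (a x)).
  vrw (eq_sym (asc_nat (id2 M) (ai y) (id2 N))).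
  vrw (whisker_r_inv N (whisker_l_inv M (aK y))).
  by rewrite -(asci_nat (ai z) (id2 M) (id2 N)); vsimp.
Qed.

Lemma kernel_ZHom : @ZHom B X (twisted_unit kernel_E1) a.
Proof.
  rewrite /ZHom /= => x y M; vnorm. vrw (kernel_twisted_zp M).
  by vrw (whisker_r_inv M (aK y)).
Qed.

Lemma kernel_ZIso : ZIso X (twisted_unit kernel_E1).
Proof. exact: ZIso_of_ZHom kernel_ZHom (fun x => conj (aK x) (aK' x)). Qed.

End KernelObject.

Lemma kernel_is_twisted_unit (X : ZObj B) :
  InKer X -> exists f, isZ1 f /\ ZIso X (twisted_unit f).
Proof.
  move=> HK.
  pose a x := proj1_sig (constructive_indefinite_description _ (HK x)).
  have a_iso x : iso2 (a x) := proj2_sig (constructive_indefinite_description _ (HK x)).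
  exists (kernel_E1 a a_iso (zax X)).
  exact: conj (kernel_E1_Z1 a a_iso (zax X)) (kernel_ZIso a a_iso (zax X)).
Qed.

(* B_1^{1,1} consists of the families M ↦ lact (u y) M ∘ ract (u x)⁻¹ M. *)
Definition lact [x y : ob B] (u : cell (idm y) (idm y)) (M : hom x y) : cell M M :=
  lu M ∘ (u ⊗ id2 M) ∘ lui M.

Definition ract [x y : ob B] (v : cell (idm x) (idm x)) (M : hom x y) : cell M M :=
  ru M ∘ (id2 M ⊗ v) ∘ rui M.

Lemma lact_nat [x y : ob B] (u : cell (idm y) (idm y)) [M M' : hom x y] (c : cell M M') :
  lact u M' ∘ c = c ∘ lact u M.
Proof.
  rewrite /lact; vnorm. vrw (lui_nat c). vrw (hc2_interchange u c). by vrw (eq_sym (lu_nat c)).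
Qed.

Lemma ract_nat [x y : ob B] (v : cell (idm x) (idm x)) [M M' : hom x y] (c : cell M M') :
  ract v M' ∘ c = c ∘ ract v M.
Proof.
  rewrite /ract; vnorm. vrw (rui_nat c). vrw (eq_sym (hc2_interchange c v)).
  by vrw (eq_sym (ru_nat c)).
Qed.

Lemma ract_vc [x y : ob B] (v v' : cell (idm x) (idm x)) (M : hom x y) :
  ract v M ∘ ract v' M = ract (v ∘ v') M.
Proof. by rewrite /ract; vnorm; vrw (ru_inv1 M); vrw (eq_sym (whisker_l_vc M v v')). Qed.

Lemma ract_id [x y : ob B] (M : hom x y) : ract (id2 (idm x)) M = id2 M.
Proof. by rewrite /ract hc2_id vc_id_l ru_inv2. Qed.

Lemma lact_lu [x y : ob B] (u : cell (idm y) (idm y)) (M : hom x y) :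
  lact u M ∘ lu M = lu M ∘ (u ⊗ id2 M).
Proof. by rewrite /lact; vnorm; rewrite lu_inv1 vc_id_r. Qed.

Lemma rui_ract [x y : ob B] (v : cell (idm x) (idm x)) (M : hom x y) :
  rui M ∘ ract v M = (id2 M ⊗ v) ∘ rui M.
Proof. by rewrite /ract; vnorm; vrw (ru_inv1 M). Qed.

Lemma twisted_ZHom_iff (f g : E1 B) (u : forall x, cell (idm x) (idm x)) :
  @ZHom B (twisted_unit f) (twisted_unit g) u <->
  forall x y (M : hom x y), ef g M ∘ lact (u y) M = ract (u x) M ∘ ef f M.
Proof.
  have lhsE (x y : ob B) (M : hom x y) :
    (rui M ∘ (ef g M ∘ lu M)) ∘ (u y ⊗ id2 M) = rui M ∘ ((ef g M ∘ lact (u y) M) ∘ lu M).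
  { by vnorm; rewrite lact_lu. }
  have rhsE (x y : ob B) (M : hom x y) :
    (id2 M ⊗ u x) ∘ (rui M ∘ (ef f M ∘ lu M)) = rui M ∘ ((ract (u x) M ∘ ef f M) ∘ lu M).
  { by vnorm; rewrite (vc_prefix2 (rui_ract (u x) M)); vnorm. }
  rewrite /ZHom /=; split=> H x y M.
  - by apply: unitor_conj_inj; rewrite -lhsE -rhsE.
  - by rewrite lhsE rhsE H.
Qed.

Lemma twisted_hom_iff_B1 (f g : E1 B) (u ui : forall x, cell (idm x) (idm x)) :
  (forall x, ui x ∘ u x = id2 _ /\ u x ∘ ui x = id2 _) ->
  (forall x y (M : hom x y), ef g M ∘ lact (u y) M = ract (u x) M ∘ ef f M) <->
  (forall x y (M : hom x y), ef f M ∘ efi g M = lact (u y) M ∘ ract (ui x) M).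
Proof.
  move=> Hu; split=> H x y M.
  - have Hf : ef f M = ract (ui x) M ∘ ef g M ∘ lact (u y) M.
    { by rewrite H; vrw (ract_vc (ui x) (u x) M); rewrite (proj1 (Hu x)) ract_id vc_id_l. }
    rewrite Hf; vnorm; rewrite (lact_nat (u y) (efi g M)); vrw (efK' g M).
    exact: ract_nat.
  - have Hf : ef f M = lact (u y) M ∘ ract (ui x) M ∘ ef g M.
    { by rewrite -(vc_id_r (ef f M)) -(efK g M) vc_assoc H; vnorm. }
    rewrite Hf; vnorm; vrw (ract_nat (u x) (lact (u y) M)).
    rewrite (vc_prefix2 (ract_vc (u x) (ui x) M)) (proj2 (Hu x)) ract_id vc_id_l.
    exact: ef_nat.
Qed.

Lemma twisted_ZIso_iff (f g : E1 B) : ZIso (twisted_unit f) (twisted_unit g) <-> B1rel f g.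
Proof.
  split.
  - move=> [u [ui [Hu [_ Hinv]]]]; exists u, ui; split=> //.
    exact: (proj1 (twisted_hom_iff_B1 f g u ui Hinv)) (proj1 (twisted_ZHom_iff f g u) Hu).
  - move=> [u [ui [Hinv H]]].
    apply: (@ZIso_of_ZHom (twisted_unit f) (twisted_unit g) u ui _ Hinv).
    exact: (proj2 (twisted_ZHom_iff f g u)) (proj2 (twisted_hom_iff_B1 f g u ui Hinv) H).
Qed.

Lemma unitors_idm_coherence [x y : ob B] (M : hom x y) :
  asc M (idm x) (idm x) ∘ (rui M ⊗ id2 (idm x)) ∘ (lu M ⊗ id2 (idm x)) ∘ asci (idm y) M (idm x)
    ∘ (id2 (idm y) ⊗ rui M) ∘ (id2 (idm y) ⊗ lu M) ∘ asc (idm y) (idm y) M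
    ∘ (lui (idm y) ⊗ id2 M)
  = (id2 M ⊗ lui (idm x)) ∘ rui M ∘ lu M.
Proof.
  rewrite lui_rui_idm triangle_inv. vrw (eq_sym (whisker_l_vc (idm y) (lu M) (lui M))).
  rewrite lu_inv2 hc2_id vc_id_r.
  vrw (rui_hc (idm y) M). vrw (eq_sym (rui_nat (lu M))). vrw (eq_sym (rui_nat (rui M))).
  by vrw (asc_rui_hc M (idm x)); rewrite lui_rui_idm.
Qed.

(* The unitor λ_Id = ρ_Id : Id ⊗ Id ≅ Id is a morphism of half-braidings. *)
Lemma twisted_unit_tensor (f g h : E1 B) :
  (forall x y (M : hom x y), ef h M = ef f M ∘ ef g M) ->
  ZIso (twisted_unit h) (ZTensor (twisted_unit f) (twisted_unit g)).
Proof.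
  move=> Hh.
  have Hlui : @ZHom B (twisted_unit h) (ZTensor (twisted_unit f) (twisted_unit g))
                (fun x => lui (idm x)).
  { move=> x y M /=.
    rewrite (twisted_zp_l f M) (twisted_zp_r g M) !whisker_l_vc !whisker_r_vc Hh. vnorm.
    vrw (asc_nat_l (idm x) (idm x) (ef f M)).
    vrw (eq_sym (asc_nat_r (idm y) (idm y) (ef g M))).
    rewrite -(hc2_interchange (lui (idm y)) (ef g M)).
    vrw (rui_nat (ef f M)). vrw (eq_sym (hc2_interchange (ef f M) (lui (idm x)))).
    vrw (lu_nat (ef g M)).
    f_equal; rewrite !vc_assoc; f_equal; rewrite -!vc_assoc; exact: unitors_idm_coherence. }
  exact: ZIso_of_ZHom Hlui (fun x => conj (lu_inv2 (idm x)) (lu_inv1 (idm x))).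
Qed.

Definition E1_id : E1 B :=
  Build_E1 (fun x y (M : hom x y) => conj (vc_id_l (id2 M)) (vc_id_l (id2 M)))
           (fun x y M M' (c : cell M M') => eq_trans (vc_id_l c) (eq_sym (vc_id_r c))).

Lemma E1_id_Z1 : isZ1 E1_id.
Proof. by move=> x y z M N /=; rewrite hc2_id. Qed.

(* Extended to all of E_1^{1,1} by sending non-monoidal families to the unit. *)
Definition twisted_unit_obj (f : E1 B) : ZObj B :=
  match excluded_middle_informative (isZ1 f) with
  | left Hf => Build_ZObj (twisted_unit_ax Hf)
  | right _ => Build_ZObj (twisted_unit_ax E1_id_Z1)
  end.

Lemma twisted_unit_objE (f : E1 B) : isZ1 f -> zpre (twisted_unit_obj f) = twisted_unit f.
Proof. by rewrite /twisted_unit_obj; case: excluded_middle_informative. Qed.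

Lemma twisted_unit_obj_InKer (f : E1 B) : InKer (twisted_unit_obj f).
Proof.
  by rewrite /twisted_unit_obj; case: excluded_middle_informative => ?; apply: twisted_unit_InKer.
Qed.

End Bicategory.

Theorem proposition3p3 (B : Bicat) :
  exists Phi : E1 B -> ZObj B,
    (forall f, isZ1 f -> InKer (Phi f)) /\
    (forall X : ZObj B, InKer X -> exists f, isZ1 f /\ ZIso X (Phi f)) /\
    (forall f g, isZ1 f -> isZ1 g -> (ZIso (Phi f) (Phi g) <-> B1rel f g)) /\
    (forall f g h : E1 B, isZ1 f -> isZ1 g -> isZ1 h ->
       (forall x y (M : hom x y), ef h M = vc (ef f M) (ef g M)) ->
       ZIso (Phi h) (ZTensor (Phi f) (Phi g))).
Proof.
  exists (@twisted_unit_obj B); split; [|split; [|split]].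
  - by move=> f _; apply: twisted_unit_obj_InKer.
  - move=> X /kernel_is_twisted_unit [f [Hf Hiso]].
    by exists f; rewrite twisted_unit_objE.
  - by move=> f g Hf Hg; rewrite !twisted_unit_objE //; apply: twisted_ZIso_iff.
  - by move=> f g h Hf Hg Hh; rewrite !twisted_unit_objE //; apply: twisted_unit_tensor.
Qed.
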